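(* Let $(\gamma_n)$ be a sequence of positive reals satisfying conditions (C1)–(C7) below, let $\omega>0$ be fixed, and let $a_n$ be defined as below. Then $\arg a_n\to 0$ as $n\to\infty$, and $\arg a_n>0$ for all sufficiently large $n$.
   Context: Let $\Delta_n=\gamma_{n+1}-\gamma_n$, $\Delta^2_n=\Delta_{n+1}-\Delta_n$. Conditions: (C1) $\gamma_n\to\infty$; (C2) $\Delta_n\to0$; (C3) there exist $n_0,m_0$ with $\gamma_{n+m}>\gamma_n$ for all $n\ge n_0$, $m\ge m_0$; (C4) $\sum 1/\gamma_j=\infty$; (C5) some $\kappa>1$ has $\sum\gamma_j^{-\kappa}<\infty$; (C6) $\sum|\Delta_n|/\gamma_n^2<\infty$; (C7) $\sum|\Delta^2_n|/\gamma_n<\infty$. For $n\ge1$, $a_n=-\frac{\omega^2}{2\gamma_{2n-1}\gamma_{2n}}+\frac{\gamma_{2n-1}}{2\gamma_{2n}}+\frac{\gamma_{2n-2}}{2\gamma_{2n-1}}+i\left(\frac{\omega}{2\gamma_{2n-1}}+\frac{\omega\gamma_{2n-2}}{2\gamma_{2n-1}\gamma_{2n}}\right)$, and $\arg$ denotes the principal argument. *)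

From Stdlib Require Import Reals Lra ClassicalEpsilon.
From Coquelicot Require Import Coquelicot.
Open Scope R_scope.

(* Principal argument of the complex number x + i y: the unique
   t in (-PI, PI] with x = |z| cos t and y = |z| sin t
   (for z = 0 every such t works; a_n is never 0 here). *)
Definition Arg (z : C) : R :=
  epsilon (inhabits 0%R)
    (fun t => -PI < t <= PI /\
              fst z = sqrt (fst z ^ 2 + snd z ^ 2) * cos t /\
              snd z = sqrt (fst z ^ 2 + snd z ^ 2) * sin t).

Definition gDelta (g : nat -> R) (n : nat) : R := g (S n) - g n.
Definition gDelta2 (g : nat -> R) (n : nat) : R := gDelta g (S n) - gDelta g n.

(* a_n for n >= 1 (for n = 0 the formula is meaningless and irrelevant). *)
Definition a_seq (g : nat -> R) (w : R) (n : nat) : C :=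
  (- w ^ 2 / (2 * g (2 * n - 1)%nat * g (2 * n)%nat)
   + g (2 * n - 1)%nat / (2 * g (2 * n)%nat)
   + g (2 * n - 2)%nat / (2 * g (2 * n - 1)%nat),
   w / (2 * g (2 * n - 1)%nat)
   + w * g (2 * n - 2)%nat / (2 * g (2 * n - 1)%nat * g (2 * n)%nat)).

(* Since g(n+1) - g(n) -> 0 and g -> oo, consecutive ratios g(n)/g(n+1) tend to 1.
   Hence Re a_n -> 1/2 + 1/2 = 1, while Im a_n -> 0 and Im a_n > 0.  In the open right
   half-plane the principal argument is atan (Im / Re), which is continuous and
   positive for positive imaginary part.  Only positivity, (C1) and (C2) are used. *)
From Stdlib Require Import Reals Lra Lia ClassicalEpsilon.
From Coquelicot Require Import Coquelicot.
Open Scope R_scope.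

Lemma cos_pos_principal_angle t :
  -PI < t <= PI -> 0 < cos t -> -(PI/2) < t < PI/2.
Proof.
  intros [Hlo Hhi] Hcos; pose proof PI_RGT_0.
  split; apply Rnot_le_lt; intro Ht.
  - rewrite <- cos_neg in Hcos.
    pose proof (cos_le_0 (-t) ltac:(lra) ltac:(lra)); lra.
  - pose proof (cos_le_0 t ltac:(lra) ltac:(lra)); lra.
Qed.

Lemma polar_atan x y : 0 < x ->
  x = sqrt (x ^ 2 + y ^ 2) * cos (atan (y / x)) /\
  y = sqrt (x ^ 2 + y ^ 2) * sin (atan (y / x)).
Proof.
  intro Hx; rewrite cos_atan, sin_atan.
  assert (Hmod : sqrt (1 + (y / x)²) = sqrt (x ^ 2 + y ^ 2) / x).
  { rewrite <- (sqrt_Rsqr (sqrt (x ^ 2 + y ^ 2) / x))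
      by (apply Rlt_le, Rdiv_lt_0_compat; [apply sqrt_lt_R0; nra | lra]).
    f_equal; unfold Rsqr.
    replace (sqrt (x ^ 2 + y ^ 2) / x * (sqrt (x ^ 2 + y ^ 2) / x))
      with (sqrt (x ^ 2 + y ^ 2) * sqrt (x ^ 2 + y ^ 2) / (x * x)) by (field; lra).
    rewrite sqrt_sqrt by nra; field; lra. }
  assert (0 < sqrt (x ^ 2 + y ^ 2)) by (apply sqrt_lt_R0; nra).
  rewrite Hmod; split; field; lra.
Qed.

Lemma Arg_right_half_plane x y : 0 < x -> Arg (x, y) = atan (y / x).
Proof.
  intro Hx; unfold Arg; cbn [fst snd].
  assert (Hr : 0 < sqrt (x ^ 2 + y ^ 2)) by (apply sqrt_lt_R0; nra).
  match goal with |- epsilon ?i ?P = _ =>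
    assert (Hex : exists t, P t); [|pose proof (epsilon_spec i P Hex) as Ht; revert Ht;
                                   generalize (epsilon i P)] end.
  { exists (atan (y / x)); split; [|now apply polar_atan].
    pose proof (atan_bound (y / x)); pose proof PI_RGT_0; lra. }
  intros t [Hrange [Hc Hs]].
  assert (Hcos : 0 < cos t) by nra.
  pose proof (cos_pos_principal_angle t Hrange Hcos).
  rewrite <- (atan_tan t) by lra; f_equal.
  unfold tan; rewrite Hc, Hs at 1; field; lra.
Qed.

Lemma Arg_cvg_right_half_plane (z : nat -> C) (l : R) : 0 < l ->
  is_lim_seq (fun n => fst (z n)) l -> is_lim_seq (fun n => snd (z n)) 0 ->
  (forall n, 0 < snd (z n)) ->
  is_lim_seq (fun n => Arg (z n)) 0 /\
  exists N : nat, forall n : nat, (N <= n)%nat -> 0 < Arg (z n).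
Proof.
  intros Hl Hre Him Hpos.
  assert (Hre_pos : exists N, forall n, (N <= n)%nat -> 0 < fst (z n)).
  { apply is_lim_seq_spec in Hre; destruct (Hre (mkposreal l Hl)) as [N HN].
    exists N; intros n Hn; specialize (HN n Hn); simpl in HN.
    apply Rabs_def2 in HN; lra. }
  destruct Hre_pos as [N HN].
  assert (HArg : forall n, (N <= n)%nat -> Arg (z n) = atan (snd (z n) / fst (z n))).
  { intros n Hn; rewrite (surjective_pairing (z n)) at 1.
    now apply Arg_right_half_plane, HN. }
  split.
  - apply is_lim_seq_ext_loc with (u := fun n => atan (snd (z n) / fst (z n))).
    { exists N; intros n Hn; symmetry; now apply HArg. }
    replace (Finite 0) with (Finite (atan (0 / l)))
      by (f_equal; unfold Rdiv; rewrite Rmult_0_l; apply atan_0).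
    apply is_lim_seq_continuous.
    + apply continuity_pt_filterlim, continuous_atan.
    + apply is_lim_seq_div'; auto; lra.
  - exists N; intros n Hn; rewrite (HArg n Hn), <- atan_0.
    apply atan_increasing, Rdiv_lt_0_compat; auto.
Qed.

Lemma is_lim_seq_subseq_double (u : nat -> R) (l : Rbar) (k : nat) :
  is_lim_seq u l -> is_lim_seq (fun m => u (2 * m + k)%nat) l.
Proof.
  intro Hu; apply (is_lim_seq_subseq u l (fun m => (2 * m + k)%nat)); auto.
  apply eventually_subseq; intro n; lia.
Qed.

Lemma is_lim_seq_inv_p_infty (u : nat -> R) :
  is_lim_seq u p_infty -> is_lim_seq (fun n => / u n) 0.
Proof. intro Hu; now apply (is_lim_seq_inv u p_infty) in Hu. Qed.

Lemma is_lim_seq_ratio_succ (u : nat -> R) :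
  (forall n, 0 < u n) -> is_lim_seq u p_infty -> is_lim_seq (gDelta u) 0 ->
  is_lim_seq (fun n => u n / u (S n)) 1.
Proof.
  intros Hpos Hu Hd.
  assert (Hinv : is_lim_seq (fun n => / u (S n)) 0).
  { apply is_lim_seq_inv_p_infty, (is_lim_seq_incr_1 u p_infty), Hu. }
  replace (Finite 1) with (Finite (1 - 0 * 0)) by (f_equal; ring).
  eapply is_lim_seq_ext;
    [|exact (is_lim_seq_minus' _ _ _ _ (is_lim_seq_const 1) (is_lim_seq_mult' _ _ _ _ Hd Hinv))].
  intro n; unfold gDelta; specialize (Hpos (S n)); field; lra.
Qed.

Section Components.

Variables (g : nat -> R) (w : R).
Hypothesis Hpos : forall n, 0 < g n.
Hypothesis Hinf : is_lim_seq g p_infty.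
Hypothesis Hdelta : is_lim_seq (gDelta g) 0.

Let r (n : nat) : R := g n / g (S n).

Lemma a_seq_succ m : a_seq g w (S m) =
  (- w ^ 2 / 2 * (/ g (2 * m + 1)%nat * / g (2 * m + 2)%nat)
     + / 2 * r (2 * m + 1) + / 2 * r (2 * m),
   w / 2 * / g (2 * m + 1)%nat + w / 2 * (r (2 * m) * / g (2 * m + 2)%nat)).
Proof.
  unfold a_seq, r.
  replace (2 * S m - 1)%nat with (2 * m + 1)%nat by lia.
  replace (2 * S m - 2)%nat with (2 * m)%nat by lia.
  replace (2 * S m)%nat with (2 * m + 2)%nat by lia.
  replace (S (2 * m + 1)) with (2 * m + 2)%nat by lia.
  replace (S (2 * m)) with (2 * m + 1)%nat by lia.
  pose proof (Hpos (2 * m + 1)); pose proof (Hpos (2 * m + 2)).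
  f_equal; field; lra.
Qed.

Let inv_lim k : is_lim_seq (fun m => / g (2 * m + k)%nat) 0.
Proof. apply (is_lim_seq_subseq_double (fun n => / g n)), is_lim_seq_inv_p_infty, Hinf. Qed.

Let r_lim k : is_lim_seq (fun m => r (2 * m + k)) 1.
Proof.
  apply (is_lim_seq_subseq_double (fun n => g n / g (S n))).
  now apply is_lim_seq_ratio_succ.
Qed.

Let r_even_lim : is_lim_seq (fun m => r (2 * m)) 1.
Proof. eapply is_lim_seq_ext; [|exact (r_lim 0)]; intro m; simpl; now rewrite Nat.add_0_r. Qed.

Lemma Re_a_seq_lim : is_lim_seq (fun n => fst (a_seq g w n)) 1.
Proof.
  apply is_lim_seq_incr_1.
  replace (Finite 1) with
    (Finite (- w ^ 2 / 2 * (0 * 0) + / 2 * 1 + / 2 * 1)) by (f_equal; field).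
  eapply is_lim_seq_ext; [intro m; now rewrite a_seq_succ|].
  apply is_lim_seq_plus'; [apply is_lim_seq_plus'|];
    apply is_lim_seq_mult'; try apply is_lim_seq_const.
  - apply is_lim_seq_mult'; apply inv_lim.
  - apply r_lim.
  - exact r_even_lim.
Qed.

Lemma Im_a_seq_lim : is_lim_seq (fun n => snd (a_seq g w n)) 0.
Proof.
  apply is_lim_seq_incr_1.
  replace (Finite 0) with (Finite (w / 2 * 0 + w / 2 * (1 * 0))) by (f_equal; ring).
  eapply is_lim_seq_ext; [intro m; now rewrite a_seq_succ|].
  apply is_lim_seq_plus'; apply is_lim_seq_mult'; try apply is_lim_seq_const.
  - apply inv_lim.
  - apply is_lim_seq_mult'; [exact r_even_lim|apply inv_lim].
Qed.

End Components.

Lemma Im_a_seq_pos (g : nat -> R) (w : R) :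
  (forall n, 0 < g n) -> 0 < w -> forall n, 0 < snd (a_seq g w n).
Proof.
  intros Hpos Hw n; unfold a_seq; cbn [snd].
  pose proof (Hpos (2 * n - 2)%nat); pose proof (Hpos (2 * n - 1)%nat);
    pose proof (Hpos (2 * n)%nat).
  apply Rplus_lt_0_compat; apply Rdiv_lt_0_compat; nra.
Qed.

Theorem corollary7 (g : nat -> R) (w : R)
  (Hpos : forall n, 0 < g n)
  (C1 : is_lim_seq g p_infty)
  (C2 : is_lim_seq (gDelta g) 0)
  (C3 : exists n0 m0 : nat, forall n m : nat,
          (n0 <= n)%nat -> (m0 <= m)%nat -> g n < g (n + m)%nat)
  (C4 : is_lim_seq (sum_n (fun j => / g j)) p_infty)
  (C5 : exists kappa : R, 1 < kappa /\
          ex_series (fun j => Rpower (g j) (- kappa)))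
  (C6 : ex_series (fun n => Rabs (gDelta g n) / g n ^ 2))
  (C7 : ex_series (fun n => Rabs (gDelta2 g n) / g n))
  (Hw : 0 < w) :
  is_lim_seq (fun n => Arg (a_seq g w n)) 0 /\
  exists N : nat, forall n : nat, (N <= n)%nat -> 0 < Arg (a_seq g w n).
Proof.
  apply (Arg_cvg_right_half_plane _ 1 Rlt_0_1).
  - now apply Re_a_seq_lim.
  - now apply Im_a_seq_lim.
  - now apply Im_a_seq_pos.
Qed.
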